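(* Let $M,N$ be finitary matroids on $E$, $b=(B_M,B_N)$ with $B_M$ a base of $M$ and $B_N$ a base of $N$. Let $\mathcal{P}=\langle P_\alpha:\alpha<\xi\rangle$ be a transfinite sequence of finite directed paths without shortcuts in $D(b)$ such that for every $\beta<\alpha<\xi$ the path $P_\alpha$ is disjoint from all escorting circuits (w.r.t. $b$) of the arcs of $P_\beta$. Let $A(\mathcal{P}):=\bigcup_{\alpha<\xi}A(P_\alpha)$, let $B_M^\xi$ be obtained from $B_M$ by adding the tails and deleting the heads of the arcs in $A(\mathcal{P})\cap D_M(B_M)$, and let $B_N^\xi$ be obtained from $B_N$ by adding the tails and deleting the heads of the arcs of $D_N(B_N)$ whose reversals lie in $A(\mathcal{P})\cap D_N^{-1}(B_N)$. Then $B_M^\xi$ is a base of $M$ and $B_N^\xi$ is a base of $N$. Furthermore, if $U_{<\xi}$ is the union of the escorting circuits of the arcs of all $P_\alpha$, $\alpha<\xi$, then $D_M(B_M^\xi)[E\setminus U_{<\xi}]=D_M(B_M)[E\setminus U_{<\xi}]$ and $D_N(B_N^\xi)[E\setminus U_{<\xi}]=D_N(B_N)[E\setminus U_{<\xi}]$.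
   Context: For a base $B$ of a matroid $M$ on $E$, $D_M(B)$ is the digraph on $E$ with $ef\in D_M(B)$ iff $e\in E\setminus B$ and $f\in C_M(e,B)\setminus\{e\}$ ($C_M(e,B)$ the fundamental circuit of $e$ on $B$). $D^{-1}$ reverses all arcs; $D(b):=D_M(B_M)\cup D_N^{-1}(B_N)$. Escorting circuits of an arc $ef\in D(b)$: $C_M(e,B_M)$ if $ef\in D_M(B_M)$, and $C_N(f,B_N)$ if $ef\in D_N^{-1}(B_N)$. A path is a finite directed path; $A(P)$ denotes its arc set. A shortcut of $P$ is an arc $ef\in D(b)$ with $e,f$ on $P$, $f$ later than $e$ on $P$, and $ef\notin A(P)$. $D[X]$ denotes the subdigraph induced on $X$. *)

From Stdlib Require Import List Arith Classical.
Import ListNotations.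
Set Implicit Arguments.

Definition subset {E : Type} (A B : E -> Prop) : Prop := forall x, A x -> B x.
Definition list_set {E : Type} (l : list E) : E -> Prop := fun x => In x l.

Record finitary_matroid (E : Type) := FinitaryMatroid {
  indep : (E -> Prop) -> Prop;
  indep_empty : indep (fun _ => False);
  indep_subset : forall I J, indep J -> subset I J -> indep I;
  indep_aug : forall l1 l2 : list E, NoDup l1 -> NoDup l2 ->
    indep (list_set l1) -> indep (list_set l2) -> length l1 < length l2 ->
    exists x, In x l2 /\ ~ In x l1 /\ indep (list_set (x :: l1));
  indep_finitary : forall I,
    (forall l : list E, subset (list_set l) I -> indep (list_set l)) -> indep I
}.

Definition is_base {E} (M : finitary_matroid E) (B : E -> Prop) : Prop :=
  indep M B /\ forall J, indep M J -> subset B J -> subset J B.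

Definition is_circuit {E} (M : finitary_matroid E) (C : E -> Prop) : Prop :=
  ~ indep M C /\ forall D, subset D C -> ~ subset C D -> indep M D.

(* C is the fundamental circuit C_M(e,B) of e (not in B) on B:
   the (unique, when B is a base) circuit contained in B + e. *)
Definition fund_circuit {E} (M : finitary_matroid E) (B : E -> Prop) (e : E)
    (C : E -> Prop) : Prop :=
  ~ B e /\ is_circuit M C /\ subset C (fun x => B x \/ x = e).

Definition DM {E} (M : finitary_matroid E) (B : E -> Prop) (e f : E) : Prop :=
  ~ B e /\ exists C, fund_circuit M B e C /\ C f /\ f <> e.

Definition Db {E} (M N : finitary_matroid E) (BM BN : E -> Prop) (e f : E) : Prop :=
  DM M BM e f \/ DM N BN f e.

Definition escort {E} (M N : finitary_matroid E) (BM BN : E -> Prop) (e f : E)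
    (C : E -> Prop) : Prop :=
  (DM M BM e f /\ fund_circuit M BM e C) \/ (DM N BN f e /\ fund_circuit N BN f C).

Definition path_arc {E} (p : list E) (e f : E) : Prop :=
  exists l1 l2, p = l1 ++ e :: f :: l2.

Definition later_on {E} (p : list E) (e f : E) : Prop :=
  exists l1 l2 l3, p = l1 ++ e :: l2 ++ f :: l3.

Definition is_path {E} (D : E -> E -> Prop) (p : list E) : Prop :=
  p <> [] /\ NoDup p /\ forall e f, path_arc p e f -> D e f.

Definition no_shortcut {E} (D : E -> E -> Prop) (p : list E) : Prop :=
  ~ exists e f, D e f /\ later_on p e f /\ ~ path_arc p e f.

(* strict well-order (the index set {alpha | alpha < xi} of a transfinite sequence) *)
Definition well_order {I : Type} (lt : I -> I -> Prop) : Prop :=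
  (forall a, ~ lt a a) /\ (forall a b c, lt a b -> lt b c -> lt a c) /\
  (forall a b, lt a b \/ a = b \/ lt b a) /\ well_founded lt.

Definition newBM {E} {I : Type} (M : finitary_matroid E) (BM : E -> Prop)
    (P : I -> list E) : E -> Prop :=
  fun x => (BM x \/ exists a y, path_arc (P a) x y /\ DM M BM x y) /\
           ~ (exists a y, path_arc (P a) y x /\ DM M BM y x).

(* B_N^xi : for arcs ef of A(P) in D_N^{-1}(B_N), the D_N(B_N)-arc fe has
   tail f (added) and head e (deleted) *)
Definition newBN {E} {I : Type} (N : finitary_matroid E) (BN : E -> Prop)
    (P : I -> list E) : E -> Prop :=
  fun x => (BN x \/ exists a y, path_arc (P a) y x /\ DM N BN x y) /\
           ~ (exists a y, path_arc (P a) x y /\ DM N BN y x).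

Definition Uxi {E} {I : Type} (M N : finitary_matroid E) (BM BN : E -> Prop)
    (P : I -> list E) : E -> Prop :=
  fun x => exists a e f C, path_arc (P a) e f /\ escort M N BM BN e f C /\ C x.

From Stdlib Require Import List Arith Lia Wf_nat Classical ClassicalEpsilon
  FunctionalExtensionality PropExtensionality Sorting.Sorted.
Import ListNotations.

(* Order the M-arcs of all paths lexicographically, by path index and then by
   the position of the tail on its path.  Absence of shortcuts and the disjointness hypothesis
   say exactly that the fundamental circuit of a tail contains no head of a later arc.  Hence
   any finitely many of the exchanges, performed from the last one to the first, are single
   base exchanges; by finitarity [B_M^xi] is independent.  By well-founded induction along
   the order every head [y] lies in a circuit of [B_M^xi + y] inside [U_<xi]; circuit
   elimination against these circuits (and against the fundamental circuits of tails) shows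
   that [B_M^xi] spans and that fundamental circuits of elements outside [U_<xi] are the same
   for both bases.  The statement for [N] is the statement for [M] applied to the reversed
   paths. *)

Lemma pred_ext {E : Type} (A B : E -> Prop) : (forall z, A z <-> B z) -> A = B.
Proof.
  intros H. apply functional_extensionality. intros z. apply propositional_extensionality, H.
Qed.

Definition eq_dec_classic {E : Type} (x y : E) : {x = y} + {x <> y} :=
  excluded_middle_informative (x = y).

Lemma NoDup_remove_classic {E : Type} (x : E) l : NoDup l -> NoDup (remove eq_dec_classic x l).
Proof.
  induction l as [|h t IH]; simpl; intros Hnd; [constructor|]. inversion Hnd; subst.
  destruct (eq_dec_classic x h); auto.
  constructor; auto. intros Hh. apply in_remove in Hh. tauto.
Qed.

Lemma length_remove_NoDup {E : Type} (x : E) l :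
  NoDup l -> In x l -> S (length (remove eq_dec_classic x l)) = length l.
Proof.
  induction l as [|h t IH]; simpl; [tauto|]. intros Hnd Hx. inversion Hnd; subst.
  destruct (eq_dec_classic x h) as [->|Hxh].
  - rewrite notin_remove; auto.
  - simpl. rewrite IH; [reflexivity|assumption|destruct Hx; congruence].
Qed.

(** * Circuits of finitary matroids *)

Section Circuits.
Context {E : Type} (M : finitary_matroid E).

Lemma not_indep_finite (X : E -> Prop) :
  ~ indep M X -> exists l, subset (list_set l) X /\ ~ indep M (list_set l).
Proof.
  intros HX. apply NNPP. intros Hno. apply HX, indep_finitary.
  intros l Hl. apply NNPP. intros Hd. apply Hno. exists l. auto.
Qed.

Lemma not_indep_list_circuit (l : list E) :
  ~ indep M (list_set l) -> exists C, is_circuit M C /\ subset C (list_set l).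
Proof.
  induction l as [l IH] using (induction_ltof1 _ (@length E)). intros Hdep.
  destruct (classic (is_circuit M (list_set l))) as [Hc|Hnc].
  { exists (list_set l). split; [exact Hc|intros x Hx; exact Hx]. }
  assert (HD : exists D, subset D (list_set l) /\ ~ subset (list_set l) D /\ ~ indep M D).
  { apply NNPP. intros Hno. apply Hnc. split; [exact Hdep|].
    intros D HDl HlD. apply NNPP. intros HD. apply Hno. eauto. }
  destruct HD as [D [HDl [HlD HD]]].
  assert (Hx : exists x, In x l /\ ~ D x).
  { apply NNPP. intros Hno. apply HlD. intros x Hx. apply NNPP. eauto. }
  destruct Hx as [x [Hxl HxD]].
  destruct (IH (remove eq_dec_classic x l)) as [C [HC HCs]].
  - apply remove_length_lt, Hxl.
  - intros Hi. apply HD. apply (indep_subset M Hi). intros y Hy.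
    apply in_in_remove; [intros ->; contradiction|apply HDl, Hy].
  - exists C. split; [exact HC|]. intros y Hy. apply (in_remove _ _ _ _ (HCs y Hy)).
Qed.

Lemma not_indep_circuit (X : E -> Prop) :
  ~ indep M X -> exists C, is_circuit M C /\ subset C X.
Proof.
  intros HX. destruct (not_indep_finite X HX) as [l [Hl Hdep]].
  destruct (not_indep_list_circuit l Hdep) as [C [HC HCl]].
  exists C. split; [exact HC|]. intros x Hx. apply Hl, HCl, Hx.
Qed.

Lemma circuit_finite (C : E -> Prop) :
  is_circuit M C -> exists l, NoDup l /\ forall x, C x <-> In x l.
Proof.
  intros [Hdep Hmin]. destruct (not_indep_finite C Hdep) as [l [Hl Hdl]].
  exists (nodup eq_dec_classic l). split; [apply NoDup_nodup|].
  intros x. rewrite nodup_In. split; [|apply Hl].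
  intros Hx. apply NNPP. intros Hxl. apply Hdl, Hmin; [exact Hl|].
  intros HCl. apply Hxl, HCl, Hx.
Qed.

Lemma circuit_not_subset (C1 C2 : E -> Prop) :
  is_circuit M C1 -> is_circuit M C2 -> C1 <> C2 -> exists f, C1 f /\ ~ C2 f.
Proof.
  intros [Hdep1 _] [_ Hmin2] Hne. apply NNPP. intros Hno.
  assert (Hs : subset C1 C2) by (intros x Hx; apply NNPP; eauto).
  apply Hne, pred_ext. intros x. split; [apply Hs|]. intros Hx2. apply NNPP. intros Hx1.
  apply Hdep1, Hmin2; [exact Hs|]. intros H. exact (Hx1 (H x Hx2)).
Qed.

Lemma indep_augment_to (l1 l2 : list E) :
  NoDup l1 -> NoDup l2 -> indep M (list_set l1) -> indep M (list_set l2) ->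
  length l1 <= length l2 ->
  exists l3, NoDup l3 /\ indep M (list_set l3) /\ incl l1 l3 /\
    incl l3 (l1 ++ l2) /\ length l3 = length l2.
Proof.
  remember (length l2 - length l1) as k eqn:Hk. revert l1 Hk.
  induction k as [|k IH]; intros l1 Hk Hn1 Hn2 Hi1 Hi2 Hle.
  { exists l1. repeat split; auto using incl_refl, incl_appl; lia. }
  destruct (indep_aug M Hn1 Hn2 Hi1 Hi2) as [x [Hx2 [Hx1 Hxi]]]; [lia|].
  destruct (IH (x :: l1)) as [l3 [H3n [H3i [H3inc [H3sub H3len]]]]];
    simpl; auto; [lia|constructor; auto|lia|].
  exists l3. repeat split; auto.
  - intros z Hz. apply H3inc. right. exact Hz.
  - intros z Hz. apply in_app_iff. destruct (in_app_or _ _ _ (H3sub z Hz)) as [[<-|]|]; auto.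
Qed.

(* Augment [C1 - f] inside the independent [(C1 u C2) - e]
   to a set of the same size; it must avoid [f], hence be [(C1 u C2) - f], which contains [C2]. *)
Lemma circuit_weak_elim (C1 C2 : E -> Prop) e :
  is_circuit M C1 -> is_circuit M C2 -> C1 <> C2 -> C1 e -> C2 e ->
  ~ indep M (fun x => (C1 x \/ C2 x) /\ x <> e).
Proof.
  intros HC1 HC2 Hne He1 He2 Hi.
  destruct (circuit_not_subset C1 C2 HC1 HC2 Hne) as [f [Hf1 Hf2]].
  destruct (circuit_finite C1 HC1) as [c1 [Hn1 Hc1]].
  destruct (circuit_finite C2 HC2) as [c2 [Hn2 Hc2]].
  set (u := nodup eq_dec_classic (c1 ++ c2)).
  assert (Hu : forall x, In x u <-> C1 x \/ C2 x).
  { intros x. unfold u. rewrite nodup_In, in_app_iff, <- Hc1, <- Hc2. tauto. }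
  assert (Hnu : NoDup u) by apply NoDup_nodup.
  set (s := remove eq_dec_classic e u).
  set (i1 := remove eq_dec_classic f c1).
  assert (Hls : S (length s) = length u) by (apply length_remove_NoDup; auto; apply Hu; auto).
  assert (Hli : S (length i1) = length c1) by (apply length_remove_NoDup; auto; apply Hc1; auto).
  assert (Hc1u : length c1 <= length u).
  { apply NoDup_incl_length; auto. intros x Hx. apply Hu. left. apply Hc1, Hx. }
  assert (Hii : indep M (list_set i1)).
  { apply (proj2 HC1).
    - intros x Hx. apply in_remove in Hx. apply Hc1, Hx.
    - intros H. apply (remove_In eq_dec_classic c1 f), H, Hf1. }
  assert (His : indep M (list_set s)).
  { apply (indep_subset M Hi). intros x Hx. apply in_remove in Hx.
    split; [apply Hu|]; apply Hx. }
  destruct (indep_augment_to i1 s) as [l3 [H3n [H3i [H3inc [H3sub H3len]]]]];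
    try apply NoDup_remove_classic; auto; [lia|].
  assert (Hl3u : incl l3 u).
  { intros x Hx. destruct (in_app_or _ _ _ (H3sub x Hx)) as [Hx'|Hx']; apply in_remove in Hx';
      [apply Hu; left; apply Hc1|]; apply Hx'. }
  assert (Hfl3 : ~ In f l3).
  { intros Hfl. apply (proj1 HC1). apply (indep_subset M H3i). intros x Hx.
    destruct (eq_dec_classic x f) as [->|Hxf]; [exact Hfl|].
    apply H3inc, in_in_remove; [exact Hxf|apply Hc1, Hx]. }
  assert (Hfull : incl (remove eq_dec_classic f u) l3).
  { apply NoDup_length_incl; [exact H3n| |].
    - pose proof (length_remove_NoDup f u Hnu (proj2 (Hu f) (or_introl Hf1))). lia.
    - intros x Hx. apply in_in_remove; [intros ->; contradiction|apply Hl3u, Hx]. }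
  apply (proj1 HC2). apply (indep_subset M H3i). intros x Hx.
  apply Hfull, in_in_remove; [intros ->; contradiction|apply Hu; right; exact Hx].
Qed.

Lemma circuit_strong_elim (C1 C2 : E -> Prop) e f :
  is_circuit M C1 -> is_circuit M C2 -> C1 e -> C2 e -> C1 f -> ~ C2 f ->
  exists C3, is_circuit M C3 /\ C3 f /\ forall z, C3 z -> (C1 z \/ C2 z) /\ z <> e.
Proof.
  intros HC1 HC2.
  destruct (circuit_finite C1 HC1) as [c1 [_ Hc1]].
  destruct (circuit_finite C2 HC2) as [c2 [_ Hc2]].
  assert (Hcover : forall z, C1 z \/ C2 z -> In z (c1 ++ c2)).
  { intros z [Hz|Hz]; apply in_app_iff; [left; apply Hc1|right; apply Hc2]; exact Hz. }
  clear Hc1 Hc2. revert C1 C2 e f HC1 HC2 Hcover.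
  induction (c1 ++ c2) as [l IH] using (induction_ltof1 _ (@length E)).
  intros C1 C2 e f HC1 HC2 Hcover He1 He2 Hf1 Hf2. apply NNPP. intros Hno.
  assert (Hne : C1 <> C2) by (intros <-; contradiction).
  destruct (not_indep_circuit _ (circuit_weak_elim C1 C2 e HC1 HC2 Hne He1 He2))
    as [C3 [HC3 HC3s]].
  assert (Hf3 : ~ C3 f) by (intros Hf3; apply Hno; exists C3; auto).
  assert (Hne31 : C3 <> C1) by (intros ->; exact (proj2 (HC3s e He1) eq_refl)).
  destruct (circuit_not_subset C3 C1 HC3 HC1 Hne31) as [g [Hg3 Hg1]].
  assert (Hg2 : C2 g) by (destruct (HC3s g Hg3) as [[|] _]; [contradiction|assumption]).
  (* Eliminate [g] from [C2, C3] keeping [e], then [e] from [C1, C4] keeping [f]. *)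
  destruct (IH (remove eq_dec_classic f l)) with (C1 := C2) (C2 := C3) (e := g) (f := e)
    as [C4 [HC4 [He4 HC4s]]]; auto.
  - apply remove_length_lt, Hcover. left. exact Hf1.
  - intros z Hz. apply in_in_remove.
    + intros ->. destruct Hz; auto.
    + apply Hcover. destruct Hz as [Hz|Hz]; auto. apply (HC3s z Hz).
  - intros He3. apply (proj2 (HC3s e He3)). reflexivity.
  - destruct (IH (remove eq_dec_classic g l)) with (C1 := C1) (C2 := C4) (e := e) (f := f)
      as [C5 [HC5 [Hf5 HC5s]]]; auto.
    + apply remove_length_lt, Hcover. right. exact Hg2.
    + intros z Hz. apply in_in_remove.
      * intros ->. destruct Hz as [Hz|Hz]; [contradiction|]. apply (proj2 (HC4s g Hz)). reflexivity.
      * apply Hcover. destruct Hz as [Hz|Hz]; auto.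
        destruct (HC4s z Hz) as [[Hz'|Hz'] _]; auto. apply (HC3s z Hz').
    + intros Hf4. destruct (HC4s f Hf4) as [[|] _]; contradiction.
    + apply Hno. exists C5. split; [exact HC5|split; [exact Hf5|]]. intros z Hz.
      destruct (HC5s z Hz) as [[Hz1|Hz4] Hze]; split; auto.
      destruct (HC4s z Hz4) as [[Hz2|Hz3] _]; auto. apply (HC3s z Hz3).
Qed.

End Circuits.

(** * Bases, exchanges and circuit elimination *)

Section Bases.
Context {E : Type} (M : finitary_matroid E).

Lemma circuit_in_insert (B C : E -> Prop) x :
  indep M B -> is_circuit M C -> subset C (fun z => B z \/ z = x) -> C x.
Proof.
  intros HB [Hdep _] Hs. apply NNPP. intros Hx. apply Hdep, (indep_subset M HB).
  intros z Hz. destruct (Hs z Hz) as [| ->]; [assumption|contradiction].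
Qed.

Lemma circuit_in_insert_unique (B C1 C2 : E -> Prop) x :
  indep M B -> is_circuit M C1 -> is_circuit M C2 ->
  subset C1 (fun z => B z \/ z = x) -> subset C2 (fun z => B z \/ z = x) -> C1 = C2.
Proof.
  intros HB HC1 HC2 Hs1 Hs2. apply NNPP. intros Hne.
  apply (circuit_weak_elim M C1 C2 x HC1 HC2 Hne);
    [eapply circuit_in_insert; eauto|eapply circuit_in_insert; eauto|].
  apply (indep_subset M HB). intros z [[Hz|Hz] Hzx];
    [destruct (Hs1 z Hz)|destruct (Hs2 z Hz)]; tauto.
Qed.

Lemma fund_circuit_mem (B C : E -> Prop) x : indep M B -> fund_circuit M B x C -> C x.
Proof. intros HB [_ [HC Hs]]. exact (circuit_in_insert B C x HB HC Hs). Qed.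

Lemma fund_circuit_unique (B C1 C2 : E -> Prop) x :
  indep M B -> fund_circuit M B x C1 -> fund_circuit M B x C2 -> C1 = C2.
Proof.
  intros HB [_ [HC1 Hs1]] [_ [HC2 Hs2]].
  exact (circuit_in_insert_unique B C1 C2 x HB HC1 HC2 Hs1 Hs2).
Qed.

Lemma fund_circuit_exists (B : E -> Prop) x :
  is_base M B -> ~ B x -> exists C, fund_circuit M B x C.
Proof.
  intros [HB Hmax] Hx.
  assert (Hdep : ~ indep M (fun z => B z \/ z = x)).
  { intros Hi. apply Hx, (Hmax _ Hi); [intros z Hz; left; exact Hz|right; reflexivity]. }
  destruct (not_indep_circuit M _ Hdep) as [C [HC Hs]].
  exists C. split; [exact Hx|split; assumption].
Qed.

Lemma DM_intro (B C : E -> Prop) x y :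
  ~ B x -> is_circuit M C -> subset C (fun z => B z \/ z = x) -> C y -> y <> x -> DM M B x y.
Proof.
  intros Hx HC Hs Hy Hyx. split; [exact Hx|].
  exists C. split; [split; [exact Hx|split; assumption]|split; assumption].
Qed.

Lemma base_of_spanning (B : E -> Prop) :
  indep M B ->
  (forall z, ~ B z -> exists C, is_circuit M C /\ subset C (fun w => B w \/ w = z)) ->
  is_base M B.
Proof.
  intros HB Hspan. split; [exact HB|]. intros J HJ HBJ z Hz. apply NNPP. intros HzB.
  destruct (Hspan z HzB) as [C [[Hdep _] HCs]]. apply Hdep, (indep_subset M HJ).
  intros w Hw. destruct (HCs w Hw) as [| ->]; [apply HBJ|]; assumption.
Qed.

Lemma base_exchange (B C : E -> Prop) x y :
  is_base M B -> fund_circuit M B x C -> C y -> y <> x ->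
  is_base M (fun z => (B z /\ z <> y) \/ z = x).
Proof.
  intros HBb HF Hy Hyx. pose proof HBb as [HB _]. pose proof HF as [Hx [HC Hs]].
  apply base_of_spanning.
  - apply NNPP. intros Hdep. destruct (not_indep_circuit M _ Hdep) as [D [HD HDs]].
    assert (HDC : D = C).
    { apply (circuit_in_insert_unique B D C x HB HD HC); [|exact Hs].
      intros z Hz. destruct (HDs z Hz) as [[]|]; auto. }
    subst D. destruct (HDs y Hy) as [[_ Hyy]|]; contradiction.
  - intros z Hz.
    destruct (classic (z = y)) as [->|Hzy].
    { exists C. split; [exact HC|]. intros w Hw.
      destruct (classic (w = y)) as [|Hwy]; [right; assumption|left].
      destruct (Hs w Hw); [left|right]; auto. }
    assert (HzB : ~ B z) by (intros HzB; apply Hz; left; auto).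
    destruct (fund_circuit_exists B z HBb HzB) as [Cz HFz]. pose proof HFz as [_ [HCz Hsz]].
    destruct (classic (Cz y)) as [Hyz|Hyz].
    + assert (Hne : Cz <> C).
      { intros ->. destruct (Hs z (fund_circuit_mem B C z HB HFz)) as [| ->]; [contradiction|].
        apply Hz. right. reflexivity. }
      apply not_indep_circuit. intros Hi. apply (circuit_weak_elim M Cz C y HCz HC Hne Hyz Hy).
      apply (indep_subset M Hi). intros w [[Hw|Hw] Hwy];
        [destruct (Hsz w Hw)|destruct (Hs w Hw)]; subst; auto.
    + exists Cz. split; [exact HCz|]. intros w Hw.
      destruct (Hsz w Hw) as [HwB| ->]; [left; left; split|right]; auto.
      intros ->. contradiction.
Qed.

Section ExchangeSequence.
Context {K : Type} (tail head : K -> E).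

Definition exchange (B : E -> Prop) (L : list K) : E -> Prop :=
  fun z => (B z \/ exists k, In k L /\ tail k = z) /\ ~ exists k, In k L /\ head k = z.

Definition triangular_exchanges (B : E -> Prop) (L : list K) : Prop :=
  forall l1 k l2, L = l1 ++ k :: l2 ->
    exists C, fund_circuit M B (tail k) C /\ C (head k) /\ head k <> tail k /\
      forall k', In k' l2 -> ~ C (head k').

Lemma triangular_exchanges_mem B L k :
  triangular_exchanges B L -> In k L -> ~ B (tail k) /\ B (head k).
Proof.
  intros HL Hk. destruct (in_split _ _ Hk) as [l1 [l2 Heq]].
  destruct (HL l1 k l2 Heq) as [C [[Ht [_ Hs]] [Hh [Hne _]]]].
  split; [exact Ht|]. destruct (Hs _ Hh); [assumption|contradiction].
Qed.

Lemma exchange_snoc B L k :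
  (forall k', In k' (L ++ [k]) -> ~ B (tail k') /\ B (head k')) ->
  exchange B (L ++ [k]) = exchange (fun z => (B z /\ z <> head k) \/ z = tail k) L.
Proof.
  intros HLk. apply pred_ext. intros z. unfold exchange.
  assert (HLk1 : forall k', In k' L -> ~ B (tail k') /\ B (head k'))
    by (intros k' Hk'; apply HLk, in_or_app; left; exact Hk').
  assert (Hk : ~ B (tail k) /\ B (head k)) by (apply HLk, in_or_app; right; left; reflexivity).
  setoid_rewrite in_app_iff. simpl. split.
  - intros [[HzB|[k' [[Hk'|[<-|[]]] <-]]] Hnh].
    + split; [left; left; split; [exact HzB|]|].
      * intros ->. apply Hnh. exists k. tauto.
      * intros [k'' [Hk'' Hh]]. apply Hnh. eauto.
    + split; [right; eauto|]. intros [k'' [Hk'' Hh]]. apply Hnh. eauto.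
    + split; [left; right; reflexivity|]. intros [k'' [Hk'' Hh]]. apply Hnh. eauto.
  - intros [[[[HzB Hzk]| ->]|[k' [Hk' <-]]] Hnh].
    + split; [left; exact HzB|]. intros [k'' [[Hk''|[<-|[]]] Hh]]; [apply Hnh; eauto|].
      symmetry in Hh. contradiction.
    + split; [right; exists k; tauto|].
      intros [k'' [[Hk''|[<-|[]]] Hh]]; [apply Hnh; eauto|].
      rewrite Hh in Hk. tauto.
    + split; [right; eauto|]. intros [k'' [[Hk''|[<-|[]]] Hh]]; [apply Hnh; eauto|].
      destruct (HLk1 k' Hk'). rewrite Hh in Hk. tauto.
Qed.

(* Exchanging the last pair first keeps the remaining sequence triangular: its fundamental
   circuits avoid the deleted head, so they are also fundamental circuits in the new base. *)
Lemma triangular_exchanges_snoc B L k C :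
  indep M B -> triangular_exchanges B (L ++ [k]) ->
  fund_circuit M B (tail k) C -> C (head k) ->
  triangular_exchanges (fun z => (B z /\ z <> head k) \/ z = tail k) L.
Proof.
  intros HB HL HF Hh l1 k1 l2 ->.
  destruct (HL l1 k1 (l2 ++ [k])) as [C1 [HF1 [Hh1 [Hne1 Hlater]]]];
    [rewrite <- app_assoc; reflexivity|].
  assert (HnCk : ~ C1 (head k)) by (apply Hlater, in_or_app; right; left; reflexivity).
  assert (Htt : tail k1 <> tail k).
  { intros Htt. rewrite Htt in HF1.
    rewrite (fund_circuit_unique B C1 C (tail k) HB HF1 HF) in HnCk. contradiction. }
  pose proof HF1 as [Ht1 [HC1 HC1s]].
  exists C1. split; [|split; [exact Hh1|split; [exact Hne1|]]].
  - split; [intros [[]| ]; contradiction|split; [exact HC1|]].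
    intros z Hz. destruct (HC1s z Hz) as [HzB| ->]; [left; left; split|right]; auto.
    intros ->. contradiction.
  - intros k' Hk'. apply Hlater, in_or_app. left. exact Hk'.
Qed.

Lemma exchange_base L B : is_base M B -> triangular_exchanges B L -> is_base M (exchange B L).
Proof.
  revert B. induction L as [|k L IH] using rev_ind; intros B HB HL.
  - replace (exchange B []) with B; [exact HB|].
    apply pred_ext. intros z. unfold exchange. simpl. firstorder.
  - destruct (HL L k []) as [C [HF [Hh [Hne _]]]]; [reflexivity|].
    rewrite exchange_snoc by (intros k' Hk'; apply (triangular_exchanges_mem B _ k' HL Hk')).
    apply IH; [exact (base_exchange B C _ _ HB HF Hh Hne)|].
    exact (triangular_exchanges_snoc B L k C (proj1 HB) HL HF Hh).
Qed.

End ExchangeSequence.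

Section Elimination.
Variables (Good Fix U : E -> Prop) (w : E).
Hypothesis fix_circuit : forall g, Fix g -> exists D, is_circuit M D /\ D g /\ ~ D w /\
  subset D U /\ subset D (fun z => Good z \/ z = g).

(* Each element [g] of [Fix] in [C] is removed by strong elimination against its circuit,
   keeping [w]; the elements of [Fix] still to be removed shrink at each step. *)
Lemma circuit_eliminate C :
  is_circuit M C -> C w -> subset C U -> subset C (fun z => Good z \/ Fix z \/ z = w) ->
  exists C', is_circuit M C' /\ C' w /\ subset C' U /\ subset C' (fun z => Good z \/ z = w).
Proof.
  intros HC Hw HU Hs. destruct (circuit_finite M C HC) as [l [_ Hl]].
  assert (Hsl : subset C (fun z => Good z \/ (Fix z /\ In z l) \/ z = w)).
  { intros z Hz. destruct (Hs z Hz) as [|[|]]; auto. right; left. split; [|apply Hl]; assumption. }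
  clear Hs Hl. revert C HC Hw HU Hsl.
  induction l as [l IH] using (induction_ltof1 _ (@length E)). intros C HC Hw HU Hs.
  destruct (classic (exists g, C g /\ ~ Good g /\ g <> w)) as [[g [Hg [HgG Hgw]]]|Hclean].
  - destruct (Hs g Hg) as [|[[HFg Hgl]|]]; try contradiction.
    destruct (fix_circuit g HFg) as [D [HD [HDg [HDw [HDU HDs]]]]].
    destruct (circuit_strong_elim M C D g w HC HD Hg HDg Hw HDw) as [C3 [HC3 [Hw3 HC3s]]].
    apply (IH (remove eq_dec_classic g l)) with (C := C3); auto.
    + apply remove_length_lt, Hgl.
    + intros z Hz. destruct (HC3s z Hz) as [[|] _]; auto.
    + intros z Hz. destruct (HC3s z Hz) as [[Hz'|Hz'] Hzg].
      * destruct (Hs z Hz') as [|[[]|]]; auto. right; left. split; [|apply in_in_remove]; auto.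
      * destruct (HDs z Hz'); [auto|contradiction].
  - exists C. split; [exact HC|split; [exact Hw|split; [exact HU|]]].
    intros z Hz. destruct (classic (z = w)); [right; assumption|left].
    apply NNPP. intros HzG. apply Hclean. eauto.
Qed.

End Elimination.

End Bases.

(** * Positions on paths and sorting *)

Section Positions.
Context {E : Type}.

Fixpoint pos (x : E) (l : list E) : nat :=
  match l with
  | [] => 0
  | h :: t => if eq_dec_classic h x then 0 else S (pos x t)
  end.

Lemma pos_app (l1 l2 : list E) x : NoDup (l1 ++ x :: l2) -> pos x (l1 ++ x :: l2) = length l1.
Proof.
  induction l1 as [|h t IH]; simpl; intros Hnd.
  - destruct (eq_dec_classic x x); congruence.
  - inversion Hnd as [|? ? Hh Hnd']; subst. destruct (eq_dec_classic h x) as [->|].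
    + exfalso. apply Hh, in_or_app. right. left. reflexivity.
    + rewrite IH; auto.
Qed.

Lemma pos_cases (p l1 l2 : list E) x y : NoDup p -> p = l1 ++ x :: l2 -> In y p ->
  y = x \/ pos y p < length l1 \/ (length l1 < pos y p /\ later_on p x y).
Proof.
  intros Hnd Hp Hy. rewrite Hp in Hy. apply in_app_or in Hy. destruct Hy as [Hy|[<-|Hy]]; auto.
  - apply in_split in Hy. destruct Hy as [m1 [m2 ->]]. right; left.
    assert (Hp' : p = m1 ++ y :: (m2 ++ x :: l2)) by (rewrite Hp, <- app_assoc; reflexivity).
    rewrite Hp' in Hnd |- *. rewrite pos_app by exact Hnd. rewrite length_app. simpl. lia.
  - apply in_split in Hy. destruct Hy as [n1 [n2 ->]]. right; right.
    assert (Hp' : p = (l1 ++ x :: n1) ++ y :: n2) by (rewrite Hp, <- app_assoc; reflexivity).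
    split; [|exists l1, n1, n2; exact Hp].
    rewrite Hp' in Hnd |- *. rewrite pos_app by exact Hnd. rewrite length_app. simpl. lia.
Qed.

Lemma pos_lt_later (p : list E) x y :
  NoDup p -> In x p -> In y p -> pos x p < pos y p -> later_on p x y.
Proof.
  intros Hnd Hx Hy Hlt. destruct (in_split _ _ Hx) as [l1 [l2 Hp]].
  assert (Hpx : pos x p = length l1) by (subst p; apply pos_app, Hnd).
  destruct (pos_cases p l1 l2 x y Hnd Hp Hy) as [->|[H|[_ H]]]; auto; lia.
Qed.

Lemma pos_inj (p : list E) x y : NoDup p -> In x p -> In y p -> pos x p = pos y p -> x = y.
Proof.
  intros Hnd Hx Hy Heq. destruct (in_split _ _ Hx) as [l1 [l2 Hp]].
  assert (Hpx : pos x p = length l1) by (subst p; apply pos_app, Hnd).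
  destruct (pos_cases p l1 l2 x y Hnd Hp Hy) as [->|[H|[H _]]]; auto; lia.
Qed.

Lemma path_arc_in (p : list E) x y : path_arc p x y -> In x p /\ In y p.
Proof. intros [l1 [l2 ->]]. split; apply in_or_app; simpl; auto. Qed.

Lemma pos_path_arc (p : list E) x y : NoDup p -> path_arc p x y -> pos y p = S (pos x p).
Proof.
  intros Hnd [l1 [l2 Hp]].
  assert (Hp' : p = (l1 ++ [x]) ++ y :: l2) by (rewrite Hp, <- app_assoc; reflexivity).
  assert (Hnd1 := Hnd). rewrite Hp in Hnd1. assert (Hnd2 := Hnd). rewrite Hp' in Hnd2.
  rewrite Hp at 2. rewrite Hp'. rewrite pos_app, pos_app by assumption.
  rewrite length_app. simpl. lia.
Qed.

Lemma path_arc_succ_unique (p : list E) x y y' :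
  NoDup p -> path_arc p x y -> path_arc p x y' -> y = y'.
Proof.
  intros Hnd H1 H2.
  apply (pos_inj p); auto; [apply (path_arc_in _ _ _ H1)|apply (path_arc_in _ _ _ H2)|].
  rewrite (pos_path_arc p x y), (pos_path_arc p x y'); auto.
Qed.

Lemma path_arc_pred_unique (p : list E) x x' y :
  NoDup p -> path_arc p x y -> path_arc p x' y -> x = x'.
Proof.
  intros Hnd H1 H2.
  apply (pos_inj p); auto; [apply (path_arc_in _ _ _ H1)|apply (path_arc_in _ _ _ H2)|].
  pose proof (pos_path_arc p x y Hnd H1). pose proof (pos_path_arc p x' y Hnd H2). lia.
Qed.

Lemma path_arc_rev (p : list E) x y : path_arc (rev p) x y <-> path_arc p y x.
Proof.
  assert (Hrev : forall (q : list E) a b, path_arc q a b -> path_arc (rev q) b a).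
  { intros q a b [l1 [l2 ->]]. exists (rev l2), (rev l1). rewrite rev_app_distr. simpl.
    rewrite <- !app_assoc. reflexivity. }
  split; [|apply Hrev]. intros H. rewrite <- (rev_involutive p). apply Hrev, H.
Qed.

Lemma later_on_rev (p : list E) x y : later_on (rev p) x y -> later_on p y x.
Proof.
  intros [l1 [l2 [l3 H]]]. exists (rev l3), (rev l2), (rev l1).
  rewrite <- (rev_involutive p), H. rewrite !rev_app_distr. simpl.
  rewrite !rev_app_distr. simpl. rewrite <- !app_assoc. reflexivity.
Qed.

End Positions.

Section Sorting.
Context {A : Type} (R : A -> A -> Prop) (Q : A -> Prop).
Hypothesis R_trans : forall a b c, R a b -> R b c -> R a c.
Hypothesis R_total : forall a b, Q a -> Q b -> R a b \/ a = b \/ R b a.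

Lemma StronglySorted_insert L t :
  StronglySorted R L -> (forall s, In s L -> Q s) -> Q t ->
  exists L', StronglySorted R L' /\ forall s, In s L' <-> In s (t :: L).
Proof.
  induction L as [|h L IH]; intros HS HQ Ht.
  { exists [t]. split; [repeat constructor|]. intros s. simpl. tauto. }
  apply StronglySorted_inv in HS as [HS HF]. rewrite Forall_forall in HF.
  destruct (R_total t h Ht (HQ h (or_introl eq_refl))) as [Hth|[<-|Hht]].
  - exists (t :: h :: L). split.
    + constructor; [constructor; [exact HS|rewrite Forall_forall; exact HF]|].
      rewrite Forall_forall. intros s [<-|Hs]; [exact Hth|exact (R_trans _ _ _ Hth (HF s Hs))].
    + intros s. simpl. tauto.
  - exists (t :: L). split; [constructor; [exact HS|rewrite Forall_forall; exact HF]|].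
    intros s. simpl. tauto.
  - destruct (IH HS (fun s Hs => HQ s (or_intror Hs)) Ht) as [L' [HS' HL']].
    exists (h :: L'). split.
    + constructor; [exact HS'|]. rewrite Forall_forall. intros s Hs.
      destruct (proj1 (HL' s) Hs) as [<-|Hs']; [exact Hht|exact (HF s Hs')].
    + intros s. simpl. rewrite HL'. simpl. tauto.
Qed.

Lemma exists_StronglySorted L0 :
  (forall s, In s L0 -> Q s) -> exists L, StronglySorted R L /\ forall s, In s L <-> In s L0.
Proof.
  induction L0 as [|t L0 IH]; intros HQ.
  { exists []. split; [constructor|reflexivity]. }
  destruct IH as [L [HS HL]]; [intros s Hs; apply HQ; right; exact Hs|].
  destruct (StronglySorted_insert L t HS (fun s Hs => HQ s (or_intror (proj1 (HL s) Hs))))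
    as [L' [HS' HL']]; [apply HQ; left; reflexivity|].
  exists L'. split; [exact HS'|]. intros s. rewrite HL'. simpl. rewrite HL. reflexivity.
Qed.

End Sorting.

Lemma StronglySorted_app_cons {A : Type} (R : A -> A -> Prop) l1 t l2 :
  StronglySorted R (l1 ++ t :: l2) -> forall s, In s l2 -> R t s.
Proof.
  induction l1 as [|h l1 IH]; simpl; intros HS; apply StronglySorted_inv in HS as [HS HF].
  - apply Forall_forall, HF.
  - apply IH, HS.
Qed.

(** * Exchanging along the arcs of [D_M(B_M)] *)

Section OneMatroid.
Context {E : Type} (M : finitary_matroid E) (B : E -> Prop)
  {I : Type} (ord : I -> I -> Prop) (P : I -> list E).
Hypothesis B_base : is_base M B.
Hypothesis ord_wo : well_order ord.
Hypothesis P_NoDup : forall a, NoDup (P a).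
Hypothesis P_no_shortcut :
  forall a e f, later_on (P a) e f -> DM M B e f -> path_arc (P a) e f.
Hypothesis P_disjoint : forall a b, ord b a -> forall e f C, path_arc (P b) e f -> DM M B e f ->
  fund_circuit M B e C -> forall x, In x (P a) -> ~ C x.

Let ord_irrefl : forall a, ~ ord a a := proj1 ord_wo.
Let ord_trans : forall a b c, ord a b -> ord b c -> ord a c := proj1 (proj2 ord_wo).
Let ord_total : forall a b, ord a b \/ a = b \/ ord b a := proj1 (proj2 (proj2 ord_wo)).
Let ord_wf : well_founded ord := proj2 (proj2 (proj2 ord_wo)).

Definition M_arc a x y := path_arc (P a) x y /\ DM M B x y.
Definition is_head y := exists a x, M_arc a x y.
Definition is_tail x := exists a y, M_arc a x y.
(* The part of [U_<xi] contributed by the arcs of [D_M(B_M)]. *)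
Definition escorted x :=
  exists a e f C, path_arc (P a) e f /\ DM M B e f /\ fund_circuit M B e C /\ C x.

Local Notation B' := (newBM M B P).

Lemma M_arc_tail_head a x y : M_arc a x y -> ~ B x /\ B y /\ y <> x.
Proof.
  intros [_ [Hx [C [[_ [_ Hs]] [Hy Hyx]]]]]. split; [exact Hx|split; [|exact Hyx]].
  destruct (Hs y Hy); [assumption|contradiction].
Qed.

Lemma M_arc_fund_circuit a x y :
  M_arc a x y -> exists C, fund_circuit M B x C /\ C y /\ C x /\ subset C escorted.
Proof.
  intros [Hp [Hx [C [HF [Hy Hyx]]]]]. exists C.
  split; [exact HF|split; [exact Hy|split; [exact (fund_circuit_mem M B C x (proj1 B_base) HF)|]]].
  intros z Hz. exists a, x, y, C. split; [exact Hp|split; [|split; assumption]].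
  split; [exact Hx|exists C; auto].
Qed.

Lemma M_arc_escorted a x y : M_arc a x y -> escorted x /\ escorted y.
Proof. intros H. destruct (M_arc_fund_circuit a x y H) as [C [_ [Hy [Hx HC]]]]. auto. Qed.

Lemma tail_not_head z : is_tail z -> ~ is_head z.
Proof.
  intros [a [y H1]] [a' [x H2]].
  apply (proj1 (M_arc_tail_head a z y H1)), (proj1 (proj2 (M_arc_tail_head a' x z H2))).
Qed.

Lemma M_arc_head_unique a x y a' x' : M_arc a x y -> M_arc a' x' y -> a = a' /\ x = x'.
Proof.
  intros H1 H2.
  assert (Hlater : forall b u b' u', ord b b' -> M_arc b u y -> M_arc b' u' y -> False).
  { intros b u b' u' Hlt Hu Hu'. destruct (M_arc_fund_circuit b u y Hu) as [C [HF [Hy _]]].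
    exact (P_disjoint b' b Hlt u y C (proj1 Hu) (proj2 Hu) HF y
             (proj2 (path_arc_in _ _ _ (proj1 Hu'))) Hy). }
  destruct (ord_total a a') as [Hlt|[<-|Hlt]]; [exfalso; eauto| |exfalso; eauto].
  split; [reflexivity|].
  exact (path_arc_pred_unique (P a) x x' y (P_NoDup a) (proj1 H1) (proj1 H2)).
Qed.

Definition arc_lt (u v : I * E) : Prop :=
  ord (fst u) (fst v) \/ (fst u = fst v /\ pos (snd u) (P (fst u)) < pos (snd v) (P (fst u))).

Lemma arc_lt_wf : well_founded arc_lt.
Proof.
  intros [a x]. revert x. induction a as [a IHa] using (well_founded_ind ord_wf).
  intros x. remember (pos x (P a)) as n eqn:Hn. revert x Hn.
  induction n as [n IHn] using (well_founded_ind lt_wf). intros x Hn.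
  constructor. intros [a' x'] [Hlt|[Heq Hlt]]; simpl in *.
  - apply IHa, Hlt.
  - subst a'. apply (IHn (pos x' (P a))); [lia|reflexivity].
Qed.

Lemma arc_lt_irrefl u : ~ arc_lt u u.
Proof. intros [H|[_ H]]; [exact (ord_irrefl _ H)|lia]. Qed.

Lemma arc_lt_trans u v w : arc_lt u v -> arc_lt v w -> arc_lt u w.
Proof.
  destruct u as [a x], v as [b y], w as [c z]. unfold arc_lt; simpl.
  intros [H1|[-> H1]] [H2|[-> H2]]; auto.
  - left. exact (ord_trans _ _ _ H1 H2).
  - right. split; [reflexivity|lia].
Qed.

Lemma arc_lt_total a x y a' x' y' : M_arc a x y -> M_arc a' x' y' ->
  arc_lt (a, x) (a', x') \/ (a, x, y) = (a', x', y') \/ arc_lt (a', x') (a, x).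
Proof.
  intros H1 H2. unfold arc_lt; simpl. destruct (ord_total a a') as [Hlt|[<-|Hlt]]; auto.
  destruct (Nat.lt_trichotomy (pos x (P a)) (pos x' (P a))) as [Hlt|[Heq|Hlt]]; auto.
  assert (x = x') as <-.
  { apply (pos_inj (P a) x x' (P_NoDup a)); [apply (path_arc_in _ _ _ (proj1 H1))|
      apply (path_arc_in _ _ _ (proj1 H2))|exact Heq]. }
  rewrite (path_arc_succ_unique (P a) x y y' (P_NoDup a) (proj1 H1) (proj1 H2)). auto.
Qed.

Lemma fund_circuit_heads_earlier a x y a' x' y' C :
  M_arc a x y -> M_arc a' x' y' -> fund_circuit M B x C -> C y' ->
  (a' = a /\ x' = x) \/ arc_lt (a', x') (a, x).
Proof.
  intros H1 H2 HF Hy'. unfold arc_lt; simpl.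
  destruct (ord_total a a') as [Hlt|[<-|Hlt]]; [exfalso| |auto].
  { exact (P_disjoint a' a Hlt x y C (proj1 H1) (proj2 H1) HF y'
             (proj2 (path_arc_in _ _ _ (proj1 H2))) Hy'). }
  destruct (classic (x' = x)) as [->|Hxx]; [auto|right; right; split; [reflexivity|]].
  destruct (M_arc_tail_head a x y H1) as [HxB _].
  destruct (M_arc_tail_head a x' y' H2) as [_ [Hy'B _]].
  destruct (path_arc_in _ _ _ (proj1 H1)) as [Hxa _].
  destruct (path_arc_in _ _ _ (proj1 H2)) as [_ Hy'a].
  assert (Hy'x : y' <> x) by (intros ->; contradiction).
  assert (Hyy : y' <> y).
  { intros ->. apply Hxx. symmetry. exact (proj2 (M_arc_head_unique a x y a x' H1 H2)). }
  pose proof (pos_path_arc (P a) x' y' (P_NoDup a) (proj1 H2)) as Hpos.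
  destruct (Nat.lt_trichotomy (pos x (P a)) (pos y' (P a))) as [Hlt|[Heq|Hlt]];
    [exfalso|exfalso|lia].
  - apply Hyy, (path_arc_succ_unique (P a) x); [exact (P_NoDup a)| |exact (proj1 H1)].
    apply P_no_shortcut; [exact (pos_lt_later _ _ _ (P_NoDup a) Hxa Hy'a Hlt)|].
    split; [exact HxB|exists C; auto].
  - exact (Hy'x (eq_sym (pos_inj _ _ _ (P_NoDup a) Hxa Hy'a Heq))).
Qed.

(* Induction along [arc_lt]: the fundamental circuit of [x] lies in [B' + y] up to heads of
   earlier arcs, which are eliminated with the circuits given by the induction hypothesis. *)
Lemma head_spanned a x y : M_arc a x y ->
  exists D, is_circuit M D /\ D y /\ subset D escorted /\ subset D (fun z => B' z \/ z = y).
Proof.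
  change a with (fst (a, x)) at 1. change x with (snd (a, x)) at 2.
  revert y. induction (a, x) as [[b u] IH] using (well_founded_ind arc_lt_wf).
  clear a x. intros y Harc. simpl in Harc.
  destruct (M_arc_fund_circuit b u y Harc) as [C [HF [HCy [HCu HCU]]]].
  pose proof HF as [HuB [HC HCs]].
  apply (circuit_eliminate M B' (fun g => exists b' u', M_arc b' u' g /\ arc_lt (b', u') (b, u))
           escorted y) with (C := C); [|exact HC|exact HCy|exact HCU|].
  - intros g [b' [u' [Harc' Hlt]]].
    destruct (IH (b', u') Hlt g Harc') as [D [HD [HDg [HDU HDs]]]].
    exists D. split; [exact HD|split; [exact HDg|split; [|split; assumption]]].
    intros HDy. destruct (HDs y HDy) as [HyB'|Hyg].
    + apply (proj2 HyB'). exists b, u. exact Harc.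
    + subst g. destruct (M_arc_head_unique b u y b' u' Harc Harc') as [<- <-].
      exact (arc_lt_irrefl _ Hlt).
  - intros z Hz. destruct (classic (z = y)) as [|Hzy]; [right; right; assumption|].
    destruct (HCs z Hz) as [HzB| ->].
    + destruct (classic (is_head z)) as [[b' [u' Harc']]|Hnh]; [right; left|left; split; auto].
      exists b', u'. split; [exact Harc'|].
      destruct (fund_circuit_heads_earlier b u y b' u' z C Harc Harc' HF Hz) as [[-> ->]|Hlt];
        [exfalso|exact Hlt].
      exact (Hzy (path_arc_succ_unique (P b) u z y (P_NoDup b) (proj1 Harc') (proj1 Harc))).
    + left. split; [right; exists b, y; exact Harc|].
      apply (tail_not_head u). exists b, y. exact Harc.
Qed.

Definition M_arc_triple (t : I * E * E) : Prop := M_arc (fst (fst t)) (snd (fst t)) (snd t).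

Lemma tails_covered_by_arcs (l : list E) : exists L,
  (forall t, In t L -> M_arc_triple t) /\
  forall z, In z l -> is_tail z -> exists t, In t L /\ snd (fst t) = z.
Proof.
  induction l as [|h l [L [HA HT]]].
  { exists []. split; [intros t []|intros z []]. }
  destruct (classic (is_tail h)) as [[a [y Harc]]|Hnt].
  - exists ((a, h, y) :: L). split.
    + intros t [<-|Ht]; [exact Harc|exact (HA t Ht)].
    + intros z [<-|Hz] Hzt; [exists (a, h, y); simpl; auto|].
      destruct (HT z Hz Hzt) as [t [Ht Htz]]. exists t. simpl. auto.
  - exists L. split; [exact HA|]. intros z [<-|Hz] Hzt; [contradiction|exact (HT z Hz Hzt)].
Qed.

(* Each finite part of [B'] lies in the result of finitely many exchanges along M-arcs; listed
   in increasing [arc_lt] order they form a triangular exchange sequence. *)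
Lemma newBM_indep : indep M B'.
Proof.
  apply indep_finitary. intros l Hl.
  destruct (tails_covered_by_arcs l) as [L0 [HA HT]].
  destruct (exists_StronglySorted (fun t t' => arc_lt (fst t) (fst t')) M_arc_triple)
    with (L0 := L0) as [L [HS HL]]; [| |exact HA|].
  { intros t t' t''. apply arc_lt_trans. }
  { intros [[a x] y] [[a' x'] y'] H1 H2. simpl.
    destruct (arc_lt_total a x y a' x' y' H1 H2) as [|[|]]; auto. }
  assert (HLa : forall t, In t L -> M_arc_triple t) by (intros t Ht; apply HA, HL, Ht).
  assert (Htri : triangular_exchanges M (fun t => snd (fst t)) snd B L).
  { intros l1 [[a x] y] l2 HLeq. rewrite HLeq in HLa, HS.
    assert (Harc : M_arc a x y) by (apply (HLa (a, x, y)), in_or_app; right; left; reflexivity).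
    destruct (M_arc_fund_circuit a x y Harc) as [C [HF [HCy _]]].
    exists C. simpl. split; [exact HF|split; [exact HCy|split]].
    { exact (proj2 (proj2 (M_arc_tail_head a x y Harc))). }
    intros [[a' x'] y'] Ht' HCy'. simpl in HCy'.
    pose proof (StronglySorted_app_cons _ l1 _ l2 HS _ Ht') as Hlt. simpl in Hlt.
    assert (Harc' : M_arc a' x' y')
      by (apply (HLa (a', x', y')), in_or_app; right; right; exact Ht').
    destruct (fund_circuit_heads_earlier a x y a' x' y' C Harc Harc' HF HCy') as [[-> ->]|Hlt'].
    - exact (arc_lt_irrefl _ Hlt).
    - exact (arc_lt_irrefl _ (arc_lt_trans _ _ _ Hlt Hlt')). }
  pose proof (exchange_base M _ _ L B B_base Htri) as [Hi _].
  apply (indep_subset M Hi). intros z Hz. destruct (Hl z Hz) as [Hz1 Hz2]. split.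
  - destruct Hz1 as [HzB|Hzt]; [left; exact HzB|right].
    destruct (HT z Hz Hzt) as [t [Ht Htz]]. exists t. split; [apply HL, Ht|exact Htz].
  - intros [t [Ht Hh]]. apply Hz2. exists (fst (fst t)), (snd (fst t)).
    rewrite <- Hh. apply HLa, Ht.
Qed.

Lemma newBM_base : is_base M B'.
Proof.
  apply (base_of_spanning M _ newBM_indep). intros z Hz.
  destruct (classic (is_head z)) as [[a [x Harc]]|Hnh].
  { destruct (head_spanned a x z Harc) as [D [HD [_ [_ HDs]]]]. exists D. auto. }
  assert (HzB : ~ B z) by (intros HzB; apply Hz; split; auto).
  destruct (fund_circuit_exists M B z B_base HzB) as [C HF]. pose proof HF as [_ [HC HCs]].
  destruct (circuit_eliminate M B' is_head (fun _ => True) z) with (C := C)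
    as [C' [HC' [_ [_ HC's]]]]; [| exact HC|exact (fund_circuit_mem M B C z (proj1 B_base) HF)|
      intros w _; trivial|..|exists C'; auto].
  - intros g [a [x Harc]]. destruct (head_spanned a x g Harc) as [D [HD [HDg [_ HDs]]]].
    exists D. split; [exact HD|split; [exact HDg|split; [|split; [intros w _; trivial|exact HDs]]]].
    intros HDz. destruct (HDs z HDz) as [| ->]; [contradiction|].
    apply Hnh. exists a, x. exact Harc.
  - intros w Hw. destruct (HCs w Hw) as [HwB| ->]; [|right; right; reflexivity].
    destruct (classic (is_head w)); [right; left; assumption|left; split; auto].
Qed.

Lemma newBM_not_escorted z : ~ escorted z -> (B' z <-> B z).
Proof.
  intros Hz. split.
  - intros [[HzB|[a [y Harc]]] _]; [exact HzB|].
    exfalso. exact (Hz (proj1 (M_arc_escorted a z y Harc))).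
  - intros HzB. split; [left; exact HzB|]. intros [a [x Harc]].
    exact (Hz (proj2 (M_arc_escorted a x z Harc))).
Qed.

Section Outside.
Variables x y : E.
Hypotheses (x_not_escorted : ~ escorted x) (y_not_escorted : ~ escorted y).

(* Tails of M-arcs are eliminated from a fundamental circuit in [B'] using their fundamental
   circuits in [B], which avoid [y] since they lie in the escorted set. *)
Lemma DM_newBM_DM : DM M B' x y -> DM M B x y.
Proof.
  intros [HxB' [C [HF [HCy Hyx]]]]. pose proof HF as [_ [HC HCs]].
  assert (HxB : ~ B x) by (rewrite <- (newBM_not_escorted x x_not_escorted); exact HxB').
  destruct (circuit_eliminate M (fun z => B z \/ z = x) is_tail (fun _ => True) y) with (C := C)
    as [C' [HC' [HC'y [_ HC's]]]]; [|exact HC|exact HCy|intros w _; trivial|..].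
  - intros g [a [y0 Harc]]. destruct (M_arc_fund_circuit a g y0 Harc) as [D [HFD [_ [HDg HDU]]]].
    pose proof HFD as [_ [HD HDs]].
    exists D. split; [exact HD|split; [exact HDg|split; [|split; [intros w _; trivial|]]]].
    + intros HDy. exact (y_not_escorted (HDU y HDy)).
    + intros z Hz. destruct (HDs z Hz); [left; left|right]; assumption.
  - intros z Hz. destruct (HCs z Hz) as [[[HzB|Hzt] _]| ->]; [left; left|right; left|left; right];
      auto.
  - apply (DM_intro M B C' x y HxB HC'); [|exact HC'y|exact Hyx].
    intros z Hz. destruct (HC's z Hz) as [| ->]; [assumption|left].
    destruct (HCs y HCy) as [HyB'| ->]; [|contradiction].
    exact (proj1 (newBM_not_escorted y y_not_escorted) HyB').
Qed.

Lemma DM_DM_newBM : DM M B x y -> DM M B' x y.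
Proof.
  intros [HxB [C [HF [HCy Hyx]]]]. pose proof HF as [_ [HC HCs]].
  assert (HxB' : ~ B' x) by (rewrite (newBM_not_escorted x x_not_escorted); exact HxB).
  destruct (circuit_eliminate M (fun z => B' z \/ z = x) is_head (fun _ => True) y) with (C := C)
    as [C' [HC' [HC'y [_ HC's]]]]; [|exact HC|exact HCy|intros w _; trivial|..].
  - intros g [a [x0 Harc]]. destruct (head_spanned a x0 g Harc) as [D [HD [HDg [HDU HDs]]]].
    exists D. split; [exact HD|split; [exact HDg|split; [|split; [intros w _; trivial|]]]].
    + intros HDy. exact (y_not_escorted (HDU y HDy)).
    + intros z Hz. destruct (HDs z Hz); [left; left|right]; assumption.
  - intros z Hz. destruct (HCs z Hz) as [HzB| ->]; [|left; right; reflexivity].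
    destruct (classic (is_head z)); [right; left; assumption|left; left; split; auto].
  - apply (DM_intro M B' C' x y HxB' HC'); [|exact HC'y|exact Hyx].
    intros z Hz. destruct (HC's z Hz) as [| ->]; [assumption|left].
    destruct (HCs y HCy) as [HyB| ->]; [|contradiction].
    exact (proj2 (newBM_not_escorted y y_not_escorted) HyB).
Qed.

End Outside.

Lemma DM_newBM_not_escorted x y :
  ~ escorted x -> ~ escorted y -> (DM M B' x y <-> DM M B x y).
Proof. intros Hx Hy. split; [apply DM_newBM_DM|apply DM_DM_newBM]; assumption. Qed.

End OneMatroid.

Section TwoMatroids.
Context {E : Type} (M N : finitary_matroid E) (BM BN : E -> Prop)
  {I : Type} (ord : I -> I -> Prop) (P : I -> list E).

Lemma no_shortcut_M p :
  no_shortcut (Db M N BM BN) p -> forall e f, later_on p e f -> DM M BM e f -> path_arc p e f.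
Proof.
  intros Hns e f Hl Hd. apply NNPP. intros Hn. apply Hns. exists e, f. split; [left|]; auto.
Qed.

(* The arcs of [D_N^{-1}(B_N)] on a path are the arcs of [D_N(B_N)] on the reversed path. *)
Lemma no_shortcut_N_rev p : no_shortcut (Db M N BM BN) p ->
  forall e f, later_on (rev p) e f -> DM N BN e f -> path_arc (rev p) e f.
Proof.
  intros Hns e f Hl Hd. apply path_arc_rev, NNPP. intros Hn. apply Hns. exists f, e.
  split; [right; exact Hd|split; [apply later_on_rev, Hl|exact Hn]].
Qed.

Hypothesis P_escort_disjoint : forall a b, ord b a -> forall e f C, path_arc (P b) e f ->
  escort M N BM BN e f C -> forall x, In x (P a) -> ~ C x.

Lemma disjoint_M a b : ord b a -> forall e f C, path_arc (P b) e f -> DM M BM e f ->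
  fund_circuit M BM e C -> forall x, In x (P a) -> ~ C x.
Proof. intros Hlt e f C Hp Hd HF. apply (P_escort_disjoint a b Hlt e f C Hp). left. auto. Qed.

Lemma disjoint_N_rev a b : ord b a -> forall e f C, path_arc (rev (P b)) e f -> DM N BN e f ->
  fund_circuit N BN e C -> forall x, In x (rev (P a)) -> ~ C x.
Proof.
  intros Hlt e f C Hp Hd HF x Hx. rewrite path_arc_rev in Hp.
  apply (P_escort_disjoint a b Hlt f e C Hp); [right; auto|apply in_rev, Hx].
Qed.

End TwoMatroids.

Lemma newBN_rev {E I : Type} (N : finitary_matroid E) (BN : E -> Prop) (P : I -> list E) :
  newBN N BN P = newBM N BN (fun a => rev (P a)).
Proof.
  apply pred_ext. intros z. unfold newBN, newBM.
  setoid_rewrite path_arc_rev. reflexivity.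
Qed.

Lemma escorted_M_Uxi {E I : Type} (M N : finitary_matroid E) BM BN (P : I -> list E) x :
  escorted M BM P x -> Uxi M N BM BN P x.
Proof.
  intros [a [e [f [C [Hp [Hd [HF HC]]]]]]]. exists a, e, f, C. split; [|split; [left|]]; auto.
Qed.

Lemma escorted_N_rev_Uxi {E I : Type} (M N : finitary_matroid E) BM BN (P : I -> list E) x :
  escorted N BN (fun a => rev (P a)) x -> Uxi M N BM BN P x.
Proof.
  intros [a [e [f [C [Hp [Hd [HF HC]]]]]]]. exists a, f, e, C.
  split; [apply path_arc_rev, Hp|split; [right|]]; auto.
Qed.

Theorem lemma3p7 (E : Type) (M N : finitary_matroid E) (BM BN : E -> Prop)
  (I : Type) (lt : I -> I -> Prop) (P : I -> list E) :
  is_base M BM -> is_base N BN -> well_order lt ->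
  (forall a, is_path (Db M N BM BN) (P a)) ->
  (forall a, no_shortcut (Db M N BM BN) (P a)) ->
  (forall a b, lt b a -> forall e f C, path_arc (P b) e f ->
     escort M N BM BN e f C -> forall x, In x (P a) -> ~ C x) ->
  is_base M (newBM M BM P) /\ is_base N (newBN N BN P) /\
  (forall x y, ~ Uxi M N BM BN P x -> ~ Uxi M N BM BN P y ->
     (DM M (newBM M BM P) x y <-> DM M BM x y)) /\
  (forall x y, ~ Uxi M N BM BN P x -> ~ Uxi M N BM BN P y ->
     (DM N (newBN N BN P) x y <-> DM N BN x y)).
Proof.
  intros HBM HBN Hwo Hpath Hns Hdis.
  assert (Hnd : forall a, NoDup (P a)) by (intros a; apply Hpath).
  assert (Hnd' : forall a, NoDup (rev (P a))) by (intros a; apply NoDup_rev, Hnd).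
  pose proof (fun a => no_shortcut_M M N BM BN (P a) (Hns a)) as HscM.
  pose proof (fun a => no_shortcut_N_rev M N BM BN (P a) (Hns a)) as HscN.
  pose proof (disjoint_M M N BM BN lt P Hdis) as HdisM.
  pose proof (disjoint_N_rev M N BM BN lt P Hdis) as HdisN.
  rewrite newBN_rev. split; [|split; [|split]].
  - exact (newBM_base M BM lt P HBM Hwo Hnd HscM HdisM).
  - exact (newBM_base N BN lt _ HBN Hwo Hnd' HscN HdisN).
  - intros x y Hx Hy. apply (DM_newBM_not_escorted M BM lt P HBM Hwo Hnd HscM HdisM);
      intros Hesc; [apply Hx|apply Hy]; apply escorted_M_Uxi, Hesc.
  - intros x y Hx Hy. apply (DM_newBM_not_escorted N BN lt _ HBN Hwo Hnd' HscN HdisN);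
      intros Hesc; [apply Hx|apply Hy]; apply (escorted_N_rev_Uxi M), Hesc.
Qed.
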